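(* For an integer $n\geq 1$ and non-negative integers $j_1,\ldots,j_n$ with $j_1,j_n\geq 1$, \[\sum_{k=0}^n(-1)^k\,\zeta^{1/2}(2j_1+1,\ldots,2j_k+1)\,\zeta^{1/2}(2j_n+1,2j_{n-1}+1,\ldots,2j_{k+1}+1)=0,\] where $\zeta^{1/2}$ of the empty index is $1$.
   Context: For integers $k_1\geq 2$, $k_2,\ldots,k_n\geq 1$, $\zeta(k_1,\ldots,k_n)=\sum_{m_1>\cdots>m_n>0}m_1^{-k_1}\cdots m_n^{-k_n}$. Let $\mathbf{p}$ run over all indices of the form $(k_1\square k_2\square\cdots\square k_n)$ where each $\square$ is a comma or a plus sign, and $\sigma(\mathbf{p})$ the number of plus signs; define $\zeta^t(k_1,\ldots,k_n)=\sum_{\mathbf{p}}t^{\sigma(\mathbf{p})}\zeta(\mathbf{p})$ and $\zeta^{1/2}$ its value at $t=1/2$. *)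

From Stdlib Require Import Reals List ClassicalEpsilon.
Import ListNotations.
Open Scope R_scope.

Fixpoint sum_lt (f : nat -> R) (M : nat) : R :=
  match M with
  | O => 0
  | S M' => sum_lt f M' + f M'
  end.

(* mzv_trunc M [k1;...;kn] = sum_{M > m1 > ... > mn > 0} m1^-k1 ... mn^-kn ;
   mzv_trunc M [] = 1. *)
Fixpoint mzv_trunc (M : nat) (ks : list nat) : R :=
  match ks with
  | nil => 1
  | k :: ks' =>
      sum_lt (fun i => / (INR (S i)) ^ k * mzv_trunc (S i) ks') (pred M)
  end.

(* The limit of a real sequence, if it converges (0 otherwise). *)
Definition seq_lim (u : nat -> R) : R :=
  match excluded_middle_informative (exists l, Un_cv u l) with
  | left H => proj1_sig (constructive_indefinite_description _ H)
  | right _ => 0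
  end.

Definition mzv (ks : list nat) : R := seq_lim (fun N => mzv_trunc N ks).

(* All indices p obtained from (k1 [] k2 [] ... [] kn) with each [] a comma or
   a plus, paired with the number sigma(p) of plus signs. *)
Fixpoint compositions (ks : list nat) : list (list nat * nat) :=
  match ks with
  | nil => [(nil, O)]
  | k :: rest =>
      flat_map (fun ps =>
        match fst ps with
        | nil => [([k], snd ps)]
        | q :: p' => [(k :: q :: p', snd ps); ((k + q)%nat :: p', S (snd ps))]
        end) (compositions rest)
  end.

Definition zeta_t (t : R) (ks : list nat) : R :=
  fold_right (fun ps acc => t ^ (snd ps) * mzv (fst ps) + acc) 0 (compositions ks).

Definition zeta_half (ks : list nat) : R := zeta_t (1/2) ks.

From Stdlib Require Import Reals List Lia Lra ClassicalEpsilon.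
Import ListNotations.
Open Scope R_scope.

(* The identity is the "antipode relation" for the t = 1/2 interpolated
   multiple zeta values, and it already holds for every truncation level.

   Write Z_N(k_1,...,k_n) for the truncation of zeta^{1/2} in which every
   summation variable is < N.  Expanding the definition of compositions,
   Z_N(k_1,...,k_n) is the sum over all tuples (x_1,...,x_n) in [0,N-1)^n of
   c(x) * prod_i (x_i+1)^{-k_i}, where the chain weight c(x) is the product
   of w(x_i, x_{i+1}) with w(a,b) = 1 if b < a, 1/2 if b = a, 0 if b > a.
   Multiplying out the k-th product in the theorem therefore gives a single
   tuple sum whose coefficient is
     sum_k (-1)^k c(x_1..x_k) c(x_n..x_{k+1}),
   and this alternating sum vanishes for every nonempty tuple because
   w(a,b) + w(b,a) = 1.  Hence the truncated identity holds exactly. *)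

Lemma sum_lt_ext (f g : nat -> R) m :
  (forall i, (i < m)%nat -> f i = g i) -> sum_lt f m = sum_lt g m.
Proof.
  induction m as [|m IH]; intros H; simpl; [reflexivity|].
  rewrite IH by (intros; apply H; lia). now rewrite H by lia.
Qed.

Lemma sum_lt_plus f g m : sum_lt (fun i => f i + g i) m = sum_lt f m + sum_lt g m.
Proof. induction m as [|m IH]; simpl; [lra|rewrite IH; lra]. Qed.

Lemma sum_lt_scal c f m : c * sum_lt f m = sum_lt (fun i => c * f i) m.
Proof. induction m as [|m IH]; simpl; [lra|rewrite <- IH; lra]. Qed.

Lemma sum_lt_zero m : sum_lt (fun _ => 0) m = 0.
Proof. induction m as [|m IH]; simpl; [lra|rewrite IH; lra]. Qed.

Lemma sum_lt_swap (f : nat -> nat -> R) a b :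
  sum_lt (fun i => sum_lt (fun j => f i j) b) a =
  sum_lt (fun j => sum_lt (fun i => f i j) a) b.
Proof.
  induction a as [|a IH]; simpl.
  - now rewrite sum_lt_zero.
  - now rewrite IH, <- sum_lt_plus.
Qed.

Lemma sum_lt_nonneg f m : (forall i, (i < m)%nat -> 0 <= f i) -> 0 <= sum_lt f m.
Proof.
  induction m as [|m IH]; intros H; simpl; [lra|].
  assert (0 <= sum_lt f m) by (apply IH; intros; apply H; lia).
  assert (0 <= f m) by (apply H; lia). lra.
Qed.

Fixpoint tuple_sum (M n : nat) (F : list nat -> R) : R :=
  match n with
  | O => F []
  | S n' => sum_lt (fun i => tuple_sum M n' (fun xs => F (i :: xs))) M
  end.

Lemma tuple_sum_ext M n F G :
  (forall xs, length xs = n -> F xs = G xs) -> tuple_sum M n F = tuple_sum M n G.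
Proof.
  revert F G; induction n as [|n IH]; intros F G H; simpl.
  - now apply H.
  - apply sum_lt_ext; intros i _. apply IH. intros xs Hl. apply H; simpl; auto.
Qed.

Lemma tuple_sum_plus M n F G :
  tuple_sum M n (fun xs => F xs + G xs) = tuple_sum M n F + tuple_sum M n G.
Proof.
  revert F G; induction n as [|n IH]; intros F G; simpl; [reflexivity|].
  rewrite <- sum_lt_plus. apply sum_lt_ext; intros. apply IH.
Qed.

Lemma tuple_sum_scal M n c F : c * tuple_sum M n F = tuple_sum M n (fun xs => c * F xs).
Proof.
  revert F; induction n as [|n IH]; intros F; simpl; [reflexivity|].
  rewrite sum_lt_scal. apply sum_lt_ext; intros. apply IH.
Qed.

Lemma tuple_sum_zero M n : tuple_sum M n (fun _ => 0) = 0.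
Proof.
  induction n as [|n IH]; simpl; [reflexivity|].
  transitivity (sum_lt (fun _ => 0) M); [|apply sum_lt_zero].
  apply sum_lt_ext; intros; exact IH.
Qed.

Lemma tuple_sum_sum_f M n (F : nat -> list nat -> R) m :
  sum_f_R0 (fun k => tuple_sum M n (F k)) m
  = tuple_sum M n (fun xs => sum_f_R0 (fun k => F k xs) m).
Proof.
  induction m as [|m IH]; simpl; [reflexivity|].
  now rewrite IH, <- tuple_sum_plus.
Qed.

Lemma tuple_sum_mult M a b F G :
  tuple_sum M a F * tuple_sum M b G
  = tuple_sum M (a + b) (fun z => F (firstn a z) * G (skipn a z)).
Proof.
  revert F; induction a as [|a IH]; intros F; simpl.
  - apply tuple_sum_scal.
  - rewrite Rmult_comm, sum_lt_scal. apply sum_lt_ext; intros i _.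
    now rewrite Rmult_comm, IH.
Qed.

Lemma tuple_sum_snoc M n F :
  tuple_sum M (S n) F = sum_lt (fun i => tuple_sum M n (fun xs => F (xs ++ [i]))) M.
Proof.
  revert F; induction n as [|n IH]; intros F; [reflexivity|].
  change (tuple_sum M (S (S n)) F)
    with (sum_lt (fun i => tuple_sum M (S n) (fun xs => F (i :: xs))) M).
  rewrite (sum_lt_ext _ (fun i => sum_lt (fun j =>
             tuple_sum M n (fun ys => F (i :: ys ++ [j]))) M) M)
    by (intros; apply IH).
  now rewrite sum_lt_swap.
Qed.

Lemma tuple_sum_rev M n F : tuple_sum M n F = tuple_sum M n (fun z => F (rev z)).
Proof.
  revert F; induction n as [|n IH]; intros F; [reflexivity|].
  rewrite tuple_sum_snoc. simpl. apply sum_lt_ext; intros i _.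
  now rewrite IH.
Qed.

(** * Chain weights and their alternating identity *)

(* w(a, b): weight of a step from a to b in a weakly decreasing chain,
   where a repeated value costs the factor 1/2. *)
Definition step_weight (a b : nat) : R :=
  if Nat.ltb b a then 1 else if Nat.eqb b a then 1/2 else 0.

Fixpoint path_weight (a : nat) (xs : list nat) : R :=
  match xs with [] => 1 | y :: ys => step_weight a y * path_weight y ys end.

Definition chain_weight (xs : list nat) : R :=
  match xs with [] => 1 | x :: ys => path_weight x ys end.

Lemma step_weight_sym a b : step_weight a b + step_weight b a = 1.
Proof.
  unfold step_weight.
  destruct (Nat.ltb_spec b a), (Nat.ltb_spec a b), (Nat.eqb_spec b a),
    (Nat.eqb_spec a b); lia || lra.
Qed.

Lemma chain_weight_snoc2 l b a :
  chain_weight (l ++ [b; a]) = chain_weight (l ++ [b]) * step_weight b a.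
Proof.
  destruct l as [|x l]; simpl; [lra|].
  revert x; induction l as [|y l IH]; intros x; simpl; [lra|].
  rewrite IH. lra.
Qed.

Definition alternating_chain_sum (z : list nat) : R :=
  sum_f_R0 (fun k => (-1) ^ k * chain_weight (firstn k z)
                     * chain_weight (rev (skipn k z))) (length z).

Lemma alternating_chain_sum_cons2 a b z :
  let X := chain_weight (rev (b :: z)) in
  alternating_chain_sum (a :: b :: z)
  = X * step_weight b a - X
    - step_weight a b * (alternating_chain_sum (b :: z) - X).
Proof.
  intros X. unfold alternating_chain_sum.
  change (length (a :: b :: z)) with (S (S (length z))).
  change (length (b :: z)) with (S (length z)).
  set (m := length z).
  set (T := fun l i => (-1) ^ i * chain_weight (firstn i l)
                       * chain_weight (rev (skipn i l))).
  change (sum_f_R0 (T (a :: b :: z)) (S (S m)) = X * step_weight b a - X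
          - step_weight a b * (sum_f_R0 (T (b :: z)) (S m) - X)).
  rewrite (decomp_sum (T (a :: b :: z))), (decomp_sum (fun i => T _ (S i))),
    (decomp_sum (T (b :: z))) by lia.
  simpl pred.
  assert (H0 : T (a :: b :: z) 0%nat = X * step_weight b a).
  { unfold T, X. simpl. rewrite <- app_assoc. simpl. rewrite chain_weight_snoc2. ring. }
  assert (H1 : T (a :: b :: z) 1%nat = - X) by (unfold T, X; simpl; ring).
  assert (H0' : T (b :: z) 0%nat = X) by (unfold T, X; simpl; ring).
  (* for k >= 2 the chain z_1..z_k starts with the step a -> b *)
  assert (Htail : sum_f_R0 (fun i => T (a :: b :: z) (S (S i))) m
                  = - step_weight a b * sum_f_R0 (fun i => T (b :: z) (S i)) m).
  { rewrite scal_sum. apply sum_eq; intros i _. unfold T. simpl. ring. }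
  rewrite H0, H1, H0', Htail. ring.
Qed.

Lemma alternating_chain_sum_zero z : z <> [] -> alternating_chain_sum z = 0.
Proof.
  induction z as [|a z IH]; intros Hz; [congruence|].
  destruct z as [|b z].
  - unfold alternating_chain_sum. simpl. ring.
  - rewrite alternating_chain_sum_cons2, IH by discriminate.
    pose proof (step_weight_sym a b) as Hsym.
    replace (step_weight b a) with (1 - step_weight a b) by lra. ring.
Qed.

Definition list_sum {A : Type} (g : A -> R) (l : list A) : R :=
  fold_right (fun ps acc => g ps + acc) 0 l.

Lemma list_sum_plus {A} (g h : A -> R) l :
  list_sum (fun ps => g ps + h ps) l = list_sum g l + list_sum h l.
Proof. induction l as [|x l IH]; simpl; [lra|rewrite IH; lra]. Qed.

Lemma list_sum_scal {A} c (g : A -> R) l :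
  c * list_sum g l = list_sum (fun ps => c * g ps) l.
Proof. induction l as [|x l IH]; simpl; [lra|rewrite <- IH; lra]. Qed.

Lemma list_sum_ext_in {A} (g h : A -> R) l :
  (forall ps, In ps l -> g ps = h ps) -> list_sum g l = list_sum h l.
Proof.
  induction l as [|x l IH]; intros H; simpl; [reflexivity|].
  rewrite H by (left; reflexivity). rewrite IH; [reflexivity|].
  intros; apply H; right; assumption.
Qed.

Lemma list_sum_app {A} (g : A -> R) l1 l2 :
  list_sum g (l1 ++ l2) = list_sum g l1 + list_sum g l2.
Proof. induction l1 as [|x l1 IH]; simpl; [lra|rewrite IH; lra]. Qed.

Lemma list_sum_flat_map {A B} (g : B -> R) (f : A -> list B) l :
  list_sum g (flat_map f l) = list_sum (fun ps => list_sum g (f ps)) l.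
Proof. induction l as [|x l IH]; simpl; [reflexivity|now rewrite list_sum_app, IH]. Qed.

Lemma list_sum_sum_lt {A} (h : nat -> A -> R) m l :
  list_sum (fun ps => sum_lt (fun i => h i ps) m) l = sum_lt (fun i => list_sum (h i) l) m.
Proof.
  induction l as [|x l IH]; simpl.
  - symmetry. apply sum_lt_zero.
  - now rewrite IH, <- sum_lt_plus.
Qed.

Lemma compositions_nonempty k ks ps :
  In ps (compositions (k :: ks)) -> fst ps <> [].
Proof.
  simpl. rewrite in_flat_map. intros [x [_ Hx]].
  destruct (fst x) as [|q p']; simpl in Hx.
  - destruct Hx as [<-|[]]; discriminate.
  - destruct Hx as [<-|[<-|[]]]; discriminate.
Qed.

(** * The truncated interpolated zeta value as a tuple sum *)

Definition zeta_half_trunc (N : nat) (ks : list nat) : R :=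
  list_sum (fun ps => (1/2) ^ snd ps * mzv_trunc N (fst ps)) (compositions ks).

(* The summand of mzv_trunc in which the largest variable equals i + 1. *)
Definition leading_term (i : nat) (p : list nat) : R :=
  match p with [] => 0 | k :: p' => / INR (S i) ^ k * mzv_trunc (S i) p' end.

Definition zeta_half_leading (i : nat) (ks : list nat) : R :=
  list_sum (fun ps => (1/2) ^ snd ps * leading_term i (fst ps)) (compositions ks).

Fixpoint monomial (ks xs : list nat) : R :=
  match ks, xs with
  | k :: ks', x :: xs' => / INR (S x) ^ k * monomial ks' xs'
  | _, _ => 1
  end.

Lemma zeta_half_trunc_nil N : zeta_half_trunc N [] = 1.
Proof. unfold zeta_half_trunc. simpl. lra. Qed.

Lemma zeta_half_leading_nil i : zeta_half_leading i [] = 0.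
Proof. unfold zeta_half_leading. simpl. lra. Qed.

Lemma zeta_half_trunc_leading N ks : ks <> [] ->
  zeta_half_trunc N ks = sum_lt (fun i => zeta_half_leading i ks) (pred N).
Proof.
  intros Hks. destruct ks as [|k ks]; [congruence|].
  unfold zeta_half_trunc, zeta_half_leading. rewrite <- list_sum_sum_lt.
  apply list_sum_ext_in. intros ps Hps.
  apply compositions_nonempty in Hps. destruct (fst ps) as [|q p']; [congruence|].
  simpl. apply sum_lt_scal.
Qed.

(* After the largest variable i + 1 (carrying k), the next entry of the index
   is either separated by a comma (a strictly smaller variable) or merged by
   a plus sign (the same variable, with weight 1/2). *)
Lemma zeta_half_leading_cons i k ks :
  zeta_half_leading i (k :: ks)
  = / INR (S i) ^ k * (zeta_half_trunc (S i) ks + 1/2 * zeta_half_leading i ks).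
Proof.
  unfold zeta_half_leading at 1. simpl compositions. rewrite list_sum_flat_map.
  unfold zeta_half_trunc, zeta_half_leading.
  rewrite list_sum_scal, <- list_sum_plus, list_sum_scal.
  apply list_sum_ext_in. intros [p s] _. simpl.
  destruct p as [|q p']; simpl.
  - ring.
  - rewrite pow_add, Rinv_mult. ring.
Qed.

Lemma sum_step_weight i X M : (i < M)%nat ->
  sum_lt (fun j => step_weight i j * X j) M = sum_lt X i + 1/2 * X i.
Proof.
  intros HiM. induction M as [|M IH]; [lia|]. simpl.
  unfold step_weight at 2.
  destruct (Nat.eq_dec i M) as [->|Hne].
  - rewrite Nat.ltb_irrefl, Nat.eqb_refl.
    rewrite (sum_lt_ext _ X) by (intros j Hj; unfold step_weight;
      destruct (Nat.ltb_spec j M); [ring|lia]).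
    ring.
  - destruct (Nat.ltb_spec M i); [lia|].
    destruct (Nat.eqb_spec M i); [lia|].
    rewrite IH by lia. ring.
Qed.

Lemma zeta_half_leading_tuple ks : forall k i M, (i < M)%nat ->
  zeta_half_leading i (k :: ks)
  = tuple_sum M (length ks)
      (fun xs => path_weight i xs * (/ INR (S i) ^ k * monomial ks xs)).
Proof.
  induction ks as [|r ks IH]; intros k i M HiM.
  - rewrite zeta_half_leading_cons, zeta_half_trunc_nil, zeta_half_leading_nil.
    simpl. ring.
  - rewrite zeta_half_leading_cons. simpl length. simpl tuple_sum.
    transitivity (sum_lt (fun j => step_weight i j
                    * (/ INR (S i) ^ k * zeta_half_leading j (r :: ks))) M).
    + rewrite sum_step_weight by exact HiM.
      rewrite zeta_half_trunc_leading by discriminate. simpl pred.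
      rewrite <- !sum_lt_scal. ring.
    + apply sum_lt_ext; intros j Hj. rewrite (IH r j M Hj), !tuple_sum_scal.
      apply tuple_sum_ext; intros xs _. simpl. ring.
Qed.

Lemma zeta_half_trunc_tuple N ks :
  zeta_half_trunc N ks
  = tuple_sum (pred N) (length ks) (fun xs => chain_weight xs * monomial ks xs).
Proof.
  destruct ks as [|k ks].
  - rewrite zeta_half_trunc_nil. simpl. ring.
  - rewrite zeta_half_trunc_leading by discriminate. simpl length. simpl tuple_sum.
    apply sum_lt_ext; intros i Hi. rewrite (zeta_half_leading_tuple ks k i (pred N) Hi).
    apply tuple_sum_ext; intros xs _. reflexivity.
Qed.

Lemma monomial_nil_r ks : monomial ks [] = 1.
Proof. now destruct ks. Qed.

Lemma monomial_split k : forall ks xs,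
  monomial ks xs = monomial (firstn k ks) (firstn k xs) * monomial (skipn k ks) (skipn k xs).
Proof.
  induction k as [|k IH]; intros ks xs.
  - simpl. ring.
  - destruct ks as [|a ks], xs as [|x xs]; simpl; rewrite ?monomial_nil_r; try ring.
    rewrite (IH ks xs). ring.
Qed.

Lemma monomial_app ks : forall xs ks' xs', length ks = length xs ->
  monomial (ks ++ ks') (xs ++ xs') = monomial ks xs * monomial ks' xs'.
Proof.
  induction ks as [|k ks IH]; intros [|x xs] ks' xs' H; simpl in *; try lia.
  - ring.
  - rewrite IH by lia. ring.
Qed.

Lemma monomial_rev ks : forall xs, length ks = length xs ->
  monomial (rev ks) (rev xs) = monomial ks xs.
Proof.
  induction ks as [|k ks IH]; intros [|x xs] H; simpl in *; try lia.
  - reflexivity.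
  - rewrite monomial_app by (rewrite !length_rev; lia). rewrite IH by lia.
    simpl. ring.
Qed.

Lemma truncated_identity N L : L <> [] ->
  sum_f_R0 (fun k => (-1) ^ k * zeta_half_trunc N (firstn k L)
                     * zeta_half_trunc N (rev (skipn k L))) (length L) = 0.
Proof.
  intros HL. set (M := pred N). set (n := length L).
  transitivity (sum_f_R0 (fun k => tuple_sum M n (fun z =>
     (-1) ^ k * (chain_weight (firstn k z) * chain_weight (rev (skipn k z)))
     * monomial L z)) n).
  - apply sum_eq; intros k Hk.
    rewrite !zeta_half_trunc_tuple. fold M.
    rewrite length_firstn, length_rev, length_skipn, Nat.min_l by lia. fold n.
    rewrite (tuple_sum_rev M (n - k)), Rmult_assoc, tuple_sum_mult, tuple_sum_scal.
    replace (k + (n - k))%nat with n by lia.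
    apply tuple_sum_ext; intros z Hz.
    rewrite (monomial_split k L z),
      (monomial_rev (skipn k L) (skipn k z)) by (rewrite !length_skipn; lia).
    ring.
  - rewrite tuple_sum_sum_f, <- (tuple_sum_zero M n).
    apply tuple_sum_ext; intros z Hz.
    assert (Hz0 : z <> []) by (intros ->; unfold n in Hz; destruct L; simpl in *; congruence).
    pose proof (alternating_chain_sum_zero z Hz0) as Hzero.
    unfold alternating_chain_sum in Hzero. rewrite Hz in Hzero.
    rewrite (sum_eq _ (fun k => (-1) ^ k * chain_weight (firstn k z)
                                 * chain_weight (rev (skipn k z)) * monomial L z))
      by (intros; ring).
    rewrite <- scal_sum, Hzero. ring.
Qed.

(** * Convergence of admissible multiple zeta values *)

Lemma inv_pow_pos i k : 0 < / INR (S i) ^ k.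
Proof. apply Rinv_0_lt_compat, pow_lt, lt_0_INR; lia. Qed.

Lemma mzv_trunc_nonneg p : forall N, 0 <= mzv_trunc N p.
Proof.
  induction p as [|k p IH]; intros N; simpl; [lra|].
  apply sum_lt_nonneg; intros i _.
  apply Rmult_le_pos; [left; apply inv_pow_pos | apply IH].
Qed.

Lemma inv_pow_le_sq i k : (2 <= k)%nat -> / INR (S i) ^ k <= / INR (S i) ^ 2.
Proof.
  intros Hk. apply Rinv_le_contravar.
  - apply pow_lt, lt_0_INR; lia.
  - apply Rle_pow; [|lia]. rewrite S_INR. pose proof (pos_INR i). lra.
Qed.

(* 1/(x+1)^2 <= 1/x - 1/(x+1): the telescoping bound behind zeta(2) <= 2. *)
Lemma inv_sq_telescoping x : 1 <= x -> / (x + 1) ^ 2 + / (x + 1) <= / x.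
Proof.
  intros Hx.
  assert (E : / x - (/ (x + 1) ^ 2 + / (x + 1)) = / (x * (x + 1) ^ 2)) by (field; lra).
  assert (0 < / (x * (x + 1) ^ 2)).
  { apply Rinv_0_lt_compat, Rmult_lt_0_compat; [lra | apply pow_lt; lra]. }
  lra.
Qed.

Lemma INR_S_ge1 n : 1 <= INR (S n).
Proof. rewrite S_INR. pose proof (pos_INR n). lra. Qed.

(* zeta_N(k) <= 2 - 1/N for k >= 2, whence zeta_N(k) <= 2. *)
Lemma depth_one_bound k m : (2 <= k)%nat ->
  sum_lt (fun i => / INR (S i) ^ k * 1) m <= 2.
Proof.
  intros Hk.
  assert (H : forall p, sum_lt (fun i => / INR (S i) ^ k * 1) (S p) <= 2 - / INR (S p)).
  { intros p; induction p as [|p IH].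
    - cbn [sum_lt]. change (INR 1) with 1. rewrite pow1, Rinv_1. lra.
    - change (sum_lt (fun i => / INR (S i) ^ k * 1) (S (S p)))
        with (sum_lt (fun i => / INR (S i) ^ k * 1) (S p) + / INR (S (S p)) ^ k * 1).
      pose proof (inv_pow_le_sq (S p) k Hk).
      pose proof (inv_sq_telescoping (INR (S p)) (INR_S_ge1 p)).
      rewrite (S_INR (S p)) in *. lra. }
  destruct m as [|m]; [simpl; lra|].
  specialize (H m). pose proof (Rinv_0_lt_compat _ (lt_0_INR (S m) ltac:(lia))). lra.
Qed.

(* This is the inequality zeta_N(k, k', ...) <= zeta_N(k' + 1, ...). *)
Lemma weighted_partial_sum_bound (a : nat -> R) k n :
  (2 <= k)%nat -> (forall i, 0 <= a i) ->
  sum_lt (fun i => / INR (S i) ^ k * sum_lt a i) n <= sum_lt (fun i => / INR (S i) * a i) n.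
Proof.
  intros Hk Ha.
  assert (HT : forall p, 0 <= sum_lt a p) by (intros; apply sum_lt_nonneg; auto).
  (* strengthened invariant, carrying the telescoping remainder T_n / n *)
  assert (Hinv : forall p,
    sum_lt (fun i => / INR (S i) ^ k * sum_lt a i) (S p) + sum_lt a (S p) * / INR (S p)
    <= sum_lt (fun i => / INR (S i) * a i) (S p)).
  { intros p; induction p as [|m IH].
    - cbn [sum_lt]. change (INR 1) with 1. rewrite Rinv_1. lra.
    - change (sum_lt ?f (S (S m))) with (sum_lt f (S m) + f (S m)) in *.
      cbv beta in *.
      set (x := INR (S m)) in *. set (T := sum_lt a (S m)) in *.
      assert (Hx : INR (S (S m)) = x + 1) by apply S_INR. rewrite Hx.
      pose proof (inv_pow_le_sq (S m) k Hk) as Hb. rewrite Hx in Hb.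
      pose proof (inv_sq_telescoping x (INR_S_ge1 m)).
      assert (T * (/ (x + 1) ^ k + / (x + 1)) <= T * / x)
        by (apply Rmult_le_compat_l; [apply HT | lra]).
      lra. }
  destruct n as [|n]; [simpl; lra|].
  specialize (Hinv n). pose proof (HT (S n)).
  pose proof (Rinv_0_lt_compat _ (lt_0_INR (S n) ltac:(lia))).
  assert (0 <= sum_lt a (S n) * / INR (S n)) by (apply Rmult_le_pos; lra).
  lra.
Qed.

Lemma depth_reduction_bound k k' rest N : (2 <= k)%nat ->
  mzv_trunc N (k :: k' :: rest) <= mzv_trunc N (S k' :: rest).
Proof.
  intros Hk. simpl mzv_trunc.
  set (a := fun i => / INR (S i) ^ k' * mzv_trunc (S i) rest).
  rewrite (sum_lt_ext (fun i => / INR (S i) ^ S k' * _) (fun i => / INR (S i) * a i))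
    by (intros; unfold a; simpl; rewrite Rinv_mult; ring).
  apply (weighted_partial_sum_bound a k (pred N) Hk).
  intros i. apply Rmult_le_pos; [left; apply inv_pow_pos | apply mzv_trunc_nonneg].
Qed.

Lemma mzv_trunc_bound rest : forall k N, (2 <= k)%nat ->
  Forall (fun x => 1 <= x)%nat rest -> mzv_trunc N (k :: rest) <= 2.
Proof.
  induction rest as [|k' rest IH]; intros k N Hk Hrest.
  - apply depth_one_bound, Hk.
  - inversion Hrest; subst.
    eapply Rle_trans; [apply depth_reduction_bound, Hk|].
    apply IH; [lia | assumption].
Qed.

Lemma mzv_trunc_growing p : Un_growing (fun N => mzv_trunc N p).
Proof.
  intros N. destruct p as [|k p]; [simpl; lra|].
  cbn [mzv_trunc]. destruct N as [|N]; cbn [pred sum_lt]; [lra|].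
  pose proof (inv_pow_pos N k). pose proof (mzv_trunc_nonneg p (S N)).
  assert (0 <= / INR (S N) ^ k * mzv_trunc (S N) p) by (apply Rmult_le_pos; lra).
  lra.
Qed.

Lemma seq_lim_spec u l : Un_cv u l -> seq_lim u = l.
Proof.
  intros H. unfold seq_lim.
  destruct (excluded_middle_informative (exists l, Un_cv u l)) as [Hex|Hnex].
  - destruct (constructive_indefinite_description _ Hex) as [l' Hl']. simpl.
    eapply UL_sequence; eassumption.
  - exfalso. apply Hnex. exists l. exact H.
Qed.

Lemma cv_const c : Un_cv (fun _ => c) c.
Proof.
  intros eps He. exists 0%nat. intros. unfold R_dist.
  rewrite Rminus_diag, Rabs_R0. exact He.
Qed.

Definition admissible (p : list nat) : Prop :=
  Forall (fun x => 1 <= x)%nat p /\ (p = [] \/ (2 <= hd 0 p)%nat).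

Lemma mzv_converges p : admissible p -> Un_cv (fun N => mzv_trunc N p) (mzv p).
Proof.
  intros [Hpos Hhead]. unfold mzv.
  enough (Hex : exists l, Un_cv (fun N => mzv_trunc N p) l).
  { destruct Hex as [l Hl]. now rewrite (seq_lim_spec _ _ Hl). }
  destruct p as [|k p].
  - exists 1. exact (cv_const 1).
  - destruct Hhead as [Hnil|Hk]; [discriminate|]. simpl in Hk.
    inversion Hpos; subst.
    destruct (growing_cv _ (mzv_trunc_growing (k :: p))) as [l Hl].
    + exists 2. intros x [N ->]. apply mzv_trunc_bound; assumption.
    + exists l. exact Hl.
Qed.

(* Merging entries only increases them, so compositions stay admissible. *)
Lemma compositions_admissible ks ps :
  admissible ks -> In ps (compositions ks) -> admissible (fst ps).
Proof.
  enough (Hgen : forall ks ps, Forall (fun x => 1 <= x)%nat ks -> In ps (compositions ks) ->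
            Forall (fun x => 1 <= x)%nat (fst ps) /\ (hd 0 ks <= hd 0 (fst ps))%nat).
  { intros [Hpos [->|Hhead]] Hps.
    - simpl in Hps. destruct Hps as [<-|[]]. split; [constructor | left; reflexivity].
    - destruct (Hgen ks ps Hpos Hps) as [Hpos' Hle]. split; [assumption | right; lia]. }
  clear. induction ks as [|k ks IH]; intros ps Hpos Hps.
  - simpl in Hps. destruct Hps as [<-|[]]. simpl. auto.
  - inversion Hpos; subst. simpl in Hps. rewrite in_flat_map in Hps.
    destruct Hps as [x [Hx Hps]]. destruct (IH x H2 Hx) as [Hposx _].
    destruct (fst x) as [|q p'] eqn:E; simpl in Hps.
    + destruct Hps as [<-|[]]. simpl. auto.
    + inversion Hposx; subst.
      destruct Hps as [<-|[<-|[]]]; simpl; split; auto; try lia.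
      constructor; [lia | assumption].
Qed.

Lemma list_sum_cv {A} (l : list A) (g : nat -> A -> R) h :
  (forall ps, In ps l -> Un_cv (fun N => g N ps) (h ps)) ->
  Un_cv (fun N => list_sum (g N) l) (list_sum h l).
Proof.
  induction l as [|x l IH]; intros H; simpl.
  - apply cv_const.
  - apply CV_plus; [apply H; left; reflexivity|].
    apply IH. intros; apply H; right; assumption.
Qed.

Lemma zeta_half_trunc_cv ks : admissible ks ->
  Un_cv (fun N => zeta_half_trunc N ks) (zeta_half ks).
Proof.
  intros Hks. apply list_sum_cv. intros ps Hps.
  apply CV_mult; [apply cv_const|].
  apply mzv_converges, (compositions_admissible ks); assumption.
Qed.

Lemma sum_f_R0_cv (u : nat -> nat -> R) (l : nat -> R) n :
  (forall k, (k <= n)%nat -> Un_cv (fun N => u N k) (l k)) ->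
  Un_cv (fun N => sum_f_R0 (u N) n) (sum_f_R0 l n).
Proof.
  induction n as [|n IH]; intros H; simpl.
  - apply H; lia.
  - apply CV_plus; [apply IH; intros; apply H; lia | apply H; lia].
Qed.

Lemma odd_indices_admissible (j : nat -> nat) l :
  (l = [] \/ (1 <= j (hd 0 l))%nat) -> admissible (map (fun i => (2 * j i + 1)%nat) l).
Proof.
  intros Hhead. split.
  - apply Forall_forall. intros x Hx. apply in_map_iff in Hx.
    destruct Hx as [i [<- _]]. lia.
  - destruct l as [|i l]; [left; reflexivity|]. right. simpl.
    destruct Hhead as [Hnil|Hj]; [discriminate | simpl in Hj; lia].
Qed.

Lemma firstn_seq k s n : (k <= n)%nat -> firstn k (seq s n) = seq s k.
Proof.
  intros Hk. replace n with (k + (n - k))%nat by lia.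
  rewrite seq_app, firstn_app, length_seq, Nat.sub_diag, firstn_all2 by (rewrite length_seq; lia).
  simpl. apply app_nil_r.
Qed.

Lemma hd_rev_seq s m : hd 0%nat (rev (seq s (S m))) = (s + m)%nat.
Proof. now rewrite seq_S, rev_app_distr. Qed.

(* j i for i = 1..n are the integers j_1, ..., j_n *)
Theorem mainTheorem9 (n : nat) (j : nat -> nat)
  (hn : (1 <= n)%nat) (hj1 : (1 <= j 1%nat)%nat) (hjn : (1 <= j n)%nat) :
  sum_f_R0 (fun k =>
      (-1) ^ k
      * zeta_half (map (fun i => (2 * j i + 1)%nat) (seq 1 k))
      * zeta_half (map (fun i => (2 * j i + 1)%nat) (rev (seq (S k) (n - k)))))
    n = 0.
Proof.
  set (f := fun i => (2 * j i + 1)%nat).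
  set (L := map f (seq 1 n)).
  assert (Hsplit : forall k, (k <= n)%nat ->
    firstn k L = map f (seq 1 k) /\ rev (skipn k L) = map f (rev (seq (S k) (n - k)))).
  { intros k Hk. unfold L.
    now rewrite firstn_map, skipn_map, firstn_seq, skipn_seq, map_rev. }
  apply (UL_sequence (fun N => sum_f_R0 (fun k => (-1) ^ k
           * zeta_half_trunc N (firstn k L) * zeta_half_trunc N (rev (skipn k L))) n)).
  - apply sum_f_R0_cv. intros k Hk. destruct (Hsplit k Hk) as [-> ->].
    apply CV_mult; [apply CV_mult; [apply cv_const|]|]; apply zeta_half_trunc_cv.
    + apply odd_indices_admissible.
      destruct k as [|k]; [left; reflexivity | right; exact hj1].
    + apply odd_indices_admissible.
      destruct (Nat.eq_dec k n) as [->|Hkn]; [left; now rewrite Nat.sub_diag|right].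
      replace (n - k)%nat with (S (n - S k)) by lia.
      rewrite hd_rev_seq. now replace (S k + (n - S k))%nat with n by lia.
  - apply (Un_cv_ext (fun _ => 0)); [|apply cv_const].
    intros N. symmetry.
    assert (HL : length L = n) by (unfold L; now rewrite length_map, length_seq).
    rewrite <- HL. apply truncated_identity.
    intros Hnil. rewrite Hnil in HL. simpl in HL. lia.
Qed.
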